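(* Let $q$ be a power of a prime $p$ and $n\ge 0$ an integer, and assume $F_n(1,x)$ is a permutation polynomial of $\mathbb{F}_q$. If $p=2$, then $3\mid n$. If $p$ is odd, then $n\not\equiv 1,2\pmod 6$.
   Context: For an integer $n\ge 1$, the $n$-th reversed Dickson polynomial of the third kind is $F_n(a,x)=\sum_{i=0}^{\lfloor n/2\rfloor}\frac{n-2i}{n-i}\binom{n-i}{i}(-x)^i a^{n-2i}$, where each coefficient $\frac{n-2i}{n-i}\binom{n-i}{i}$ is an integer (read in $\mathbb{F}_q$), and $F_0(a,x)=0$. A polynomial $f\in\mathbb{F}_q[x]$ is a permutation polynomial of $\mathbb{F}_q$ if $c\mapsto f(c)$ is a bijection of $\mathbb{F}_q$. *)

From HB Require Import structures.
From mathcomp Require Import all_boot all_order all_algebra all_field.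
Set Implicit Arguments. Unset Strict Implicit. Unset Printing Implicit Defensive.
Import GRing.Theory.
Local Open Scope ring_scope.

(* The integer coefficient (n-2i)/(n-i) * C(n-i,i), for n >= 1 and i <= n/2
   (computed exactly in nat: the division is exact). *)
Definition rdickson3_coef (n i : nat) : nat :=
  (((n - i.*2) * 'C(n - i, i)) %/ (n - i))%N.

(* n-th reversed Dickson polynomial of the third kind F_n(a, x), as a
   polynomial in x with parameter a; F_0 = 0. *)
Definition rdickson3 (R : nzRingType) (n : nat) (a : R) : {poly R} :=
  if n == 0%N then 0 else
  \sum_(i < n./2.+1)
     ((rdickson3_coef n i)%:R * a ^+ (n - i.*2)) *: (- 'X) ^+ i.

Definition is_perm_poly (F : finFieldType) (f : {poly F}) : Prop :=
  bijective (fun c : F => f.[c]).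

From HB Require Import structures.
From mathcomp Require Import all_boot all_order all_algebra all_field.
From mathcomp Require Import zify.
Set Implicit Arguments. Unset Strict Implicit. Unset Printing Implicit Defensive.
Import GRing.Theory.
Local Open Scope ring_scope.

(* F_n(1, 0) = 1, while F_n(1, 1) is the alternating sum of the (n-1)-th
   shallow diagonal of Pascal's triangle, sum_i (-1)^i C(n-1-i, i).  Pascal's
   rule gives this sum the recurrence s(m+2) = s(m+1) - s(m), so it runs
   through the 6-periodic sequence 1, 1, 0, -1, -1, 0.  A permutation
   polynomial separates 0 and 1, which excludes n = 1, 2 (mod 6); in
   characteristic 2, where -1 = 1, it also excludes n = 4, 5 (mod 6). *)

Definition alt_diag_binom (R : nzRingType) (K m : nat) : R :=
  \sum_(0 <= i < K) (-1) ^+ i * 'C(m - i, i)%:R.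

Definition sign6 (R : nzRingType) (m : nat) : R :=
  match (m %% 6)%N with 0 | 1 => 1 | 3 | 4 => -1 | _ => 0 end.

Section AltDiagBinom.

Variable R : nzRingType.

Lemma alt_diag_binom_small (K m : nat) :
  (m <= 1)%N -> (0 < K)%N -> alt_diag_binom R K m = 1.
Proof.
case: K => // K m_le1 _; rewrite /alt_diag_binom big_nat_recl // subn0 bin0 mulr1.
by rewrite big1 ?addr0 // => i _; rewrite bin_small ?mulr0 //; lia.
Qed.

Lemma alt_diag_binomSS (K m : nat) :
  alt_diag_binom R K.+1 m.+2 = alt_diag_binom R K.+1 m.+1 - alt_diag_binom R K m.
Proof.
rewrite /alt_diag_binom !big_nat_recl // !subn0 !bin0 -addrA; congr (_ + _).
rewrite -sumrN -big_split /=; apply: eq_bigr => i _.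
have pascal : 'C(m.+2 - i.+1, i.+1) = ('C(m - i, i.+1) + 'C(m - i, i))%N.
  by case: (leqP i m) => [i_le_m|m_lt_i]; [rewrite !subSS subSn // binS|
    rewrite !subSS !bin_small //; lia].
by rewrite pascal subSS natrD exprS !mulN1r !mulNr mulrDr opprD.
Qed.

Lemma sign6SS (m : nat) : sign6 R m.+2 = sign6 R m.+1 - sign6 R m.
Proof.
rewrite /sign6 -(addn2 m) -(addn1 m) -modnDml -(modnDml m 1).
have : (m %% 6 < 6)%N by rewrite ltn_mod.
case: (m %% 6)%N => [|[|[|[|[|[|r]]]]]] //= _;
  by rewrite ?subrr ?opprK ?subr0 ?sub0r ?add0r.
Qed.

Lemma alt_diag_binom_sign6 (K m : nat) :
  (m < K.*2)%N -> alt_diag_binom R K m = sign6 R m.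
Proof.
elim/ltn_ind: m K => -[|[|m]] IHm K m_lt.
- by rewrite alt_diag_binom_small //; lia.
- by rewrite alt_diag_binom_small //; lia.
case: K m_lt => [|K] m_lt; first by [].
rewrite alt_diag_binomSS sign6SS !IHm //; rewrite ?doubleS in m_lt *; lia.
Qed.

End AltDiagBinom.

Lemma rdickson3_coefE (n i : nat) :
  (0 < n)%N -> (i <= n./2)%N -> rdickson3_coef n i = 'C((n - i).-1, i).
Proof.
move=> n_gt0 i_le; rewrite /rdickson3_coef -addnn subnDA -mul_bin_down mulKn //.
have : (n./2 < n)%N by rewrite -divn2 ltn_Pdiv.
lia.
Qed.

Lemma horner_rdickson3 (R : comNzRingType) (n : nat) (c : R) : (0 < n)%N ->
  (rdickson3 n (1 : R)).[c] =
  \sum_(i < n./2.+1) 'C((n - i).-1, i)%:R * (- c) ^+ i.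
Proof.
move=> n_gt0; rewrite /rdickson3 (negbTE (lt0n_neq0 n_gt0)) horner_sum.
apply: eq_bigr => i _.
by rewrite hornerZ horner_exp hornerN hornerX expr1n mulr1 rdickson3_coefE // -ltnS.
Qed.

Lemma rdickson3_at0 (R : comNzRingType) (m : nat) :
  (rdickson3 m.+1 (1 : R)).[0] = 1.
Proof.
rewrite horner_rdickson3 // big_ord_recl /= bin0 expr0 mulr1 big1 ?addr0 //.
by move=> i _; rewrite oppr0 expr0n mulr0.
Qed.

Lemma rdickson3_at1 (R : comNzRingType) (m : nat) :
  (rdickson3 m.+1 (1 : R)).[1] = sign6 R m.
Proof.
rewrite horner_rdickson3 // -(@alt_diag_binom_sign6 R (m.+1./2.+1)); last first.
  by have := odd_double_half m.+1; rewrite doubleS; case: (odd _) => /=; lia.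
rewrite /alt_diag_binom big_mkord; apply: eq_bigr => i _.
by rewrite mulrC subSKn.
Qed.

Theorem theorem3p1 (F : finFieldType) (p n : nat) :
  p \in [pchar F] ->
  is_perm_poly (rdickson3 n (1 : F)) ->
  (p = 2%N -> (3 %| n)%N) /\
  (odd p -> (n %% 6 != 1)%N /\ (n %% 6 != 2)%N).
Proof.
move=> p_char /bij_inj F_inj; case: n F_inj => [|m] F_inj; first by rewrite mod0n.
have sign6_neq1 : sign6 F m != 1.
  apply: contraNneq (oner_neq0 F) => sign6_eq1.
  by apply/eqP/F_inj; rewrite /= rdickson3_at0 rdickson3_at1 sign6_eq1.
have sign6_neqN1 : p = 2%N -> sign6 F m != -1.
  by move=> p2; rewrite oppr_pchar2 // -p2.
move: sign6_neq1 sign6_neqN1; rewrite /sign6 /dvdn.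
rewrite -(modn_dvdm m.+1 (isT : (3 %| 6)%N)) -[m.+1]addn1 -modnDml addn1.
have : (m %% 6 < 6)%N by rewrite ltn_mod.
by case: (m %% 6)%N => [|[|[|[|[|[|r]]]]]] //= _; rewrite ?eqxx.
Qed.
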